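(* Let $G$ be a graph, let $m>1$ and let $k$ be a positive integer. Let $S\subseteq V(G)$ be such that there exists an $m$-matching from $S$ to $V(G)\setminus S$. If $G[V(G)\setminus S]$ is a $(k,m)$-expander, then $G$ is a $(k,(m-1)/2)$-expander.
   Context: An $m$-matching from $S$ to $T$ (disjoint vertex sets) is a subgraph $M$ of $G$ in which every $s\in S$ has exactly $m$ neighbors in $T$ and every vertex of $T$ has degree at most $1$. A graph $G$ is a $(k,d)$-expander if $|N_G(X)\setminus X|\ge d|X|$ for every $X\subseteq V(G)$ with $|X|\le k$, where $N_G(X)$ is the set of vertices adjacent to some vertex of $X$. *)

From mathcomp Require Import all_boot all_order all_algebra.
Set Implicit Arguments. Unset Strict Implicit. Unset Printing Implicit Defensive.
Import Order.TTheory GRing.Theory Num.Theory.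
Local Open Scope ring_scope.

Definition simple_graph (T : finType) (e : rel T) : Prop :=
  symmetric e /\ irreflexive e.

Definition nbhd (T : finType) (e : rel T) (X : {set T}) : {set T} :=
  [set y | [exists x in X, e x y]].

Definition m_matching (T : finType) (e : rel T) (m : nat) (S Tset : {set T}) : Prop :=
  [disjoint S & Tset] /\
  exists M : rel T,
    symmetric M /\ (forall x y, M x y -> e x y) /\
    (forall s, s \in S -> #|[set t in Tset | M s t]| = m) /\
    (forall t, t \in Tset -> #|[set u | M t u]| <= 1)%N.

(* The induced subgraph G[W] is a (k,d)-expander: for every X subset of W with
   |X| <= k, |N_{G[W]}(X) \ X| >= d |X|. Here N_{G[W]}(X) = N_G(X) cap W. *)
Definition induced_expander (T : finType) (e : rel T) (W : {set T}) (k : nat) (d : rat) : Prop :=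
  forall X : {set T}, X \subset W -> (#|X| <= k)%N ->
    d * (#|X|%:R) <= (#|(nbhd e X :&: W) :\: X|%:R : rat).

Definition expander (T : finType) (e : rel T) (k : nat) (d : rat) : Prop :=
  forall X : {set T}, (#|X| <= k)%N ->
    d * (#|X|%:R) <= (#|nbhd e X :\: X|%:R : rat).

From mathcomp Require Import all_boot all_order all_algebra.
From mathcomp Require Import zify.

Set Implicit Arguments.
Unset Strict Implicit.
Unset Printing Implicit Defensive.
Import Order.TTheory GRing.Theory Num.Theory.

Local Open Scope ring_scope.

(* Split X into X1 = X :&: S and X2 = X :\: S, and let c = |N(X) \ X|.  The
   expansion of G - S gives m|X2| <= c.  The m-matching gives each vertex of X1
   m private partners outside S; all m|X1| of them lie in N(X) \ X or in X2, so
   m|X1| <= c + |X2|.  Adding the first inequality to the second gives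
   (m - 1)|X| <= 2c. *)

Lemma card_bigcup_disjoint (I T : finType) (J : {set I}) (F : I -> {set T}) :
  {in J &, forall i j, i != j -> [disjoint F i & F j]} ->
  #|\bigcup_(i in J) F i| = (\sum_(i in J) #|F i|)%N.
Proof.
move: {2}#|J| (erefl #|J|) => n; elim: n J => [|n IHn] J cardJ disjF.
  move/eqP: cardJ; rewrite cards_eq0 => /eqP ->.
  by rewrite big_set0 big_set0 cards0.
have /set0Pn[i Ji] : J != set0 by rewrite -card_gt0 cardJ.
have cardJi : #|J :\ i| = n by move: cardJ; rewrite (cardsD1 i) Ji => -[].
have disjJi : {in J :\ i &, forall j k, j != k -> [disjoint F j & F k]}.
  by move=> j k /setD1P[_ Jj] /setD1P[_ Jk]; apply: disjF.
rewrite (big_setD1 i Ji) (big_setD1 i Ji) /= cardsU -IHn //.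
suff /disjoint_setI0 -> : [disjoint F i & \bigcup_(j in J :\ i) F j].
  by rewrite cards0 subn0.
by apply/bigcup_disjoint => j /setD1P[ji Jj]; apply: disjF; rewrite // eq_sym.
Qed.

Lemma card_matched_partners (T : finType) (M : rel T) (m : nat) (S W Y : {set T}) :
  symmetric M ->
  (forall s, s \in S -> #|[set t in W | M s t]| = m) ->
  (forall t, t \in W -> (#|[set u | M t u]| <= 1)%N) ->
  Y \subset S ->
  #|\bigcup_(s in Y) [set t in W | M s t]| = (m * #|Y|)%N.
Proof.
move=> Msym degS degW /subsetP YS.
rewrite card_bigcup_disjoint => [|s s' _ _ ss'].
  by rewrite (eq_bigr (fun=> m)) => [|s /YS/degS //]; rewrite sum_nat_const mulnC.
rewrite -setI_eq0; apply/eqP/setP => t; rewrite !inE.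
apply/negbTE/negP => /andP[/andP[Wt Mst] /andP[_ Ms't]].
have /card_le1_eqP eq_partners := degW t Wt.
by move: ss'; rewrite (eq_partners s s') ?eqxx // inE Msym.
Qed.

Lemma nbhd_sub (T : finType) (e : rel T) (X Y : {set T}) :
  X \subset Y -> nbhd e X \subset nbhd e Y.
Proof.
move=> /subsetP XY; apply/subsetP => y; rewrite !inE.
by case/existsP => x /andP[/XY Yx exy]; apply/existsP; exists x; rewrite Yx.
Qed.

Lemma induced_nbhd_sub (T : finType) (e : rel T) (X W : {set T}) :
  (nbhd e (X :&: W) :&: W) :\: (X :&: W) \subset nbhd e X :\: X.
Proof.
apply/subsetP => y /setDP[/setIP[Ny Wy] nXWy]; apply/setDP; split.
  by move/subsetP: (nbhd_sub e (subsetIl X W)); apply.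
by apply: contra nXWy => Xy; apply/setIP.
Qed.

Lemma matched_partners_sub (T : finType) (e M : rel T) (X Y W : {set T}) :
  (forall x y, M x y -> e x y) -> Y \subset X ->
  \bigcup_(s in Y) [set t in W | M s t] \subset (nbhd e X :\: X) :|: (X :&: W).
Proof.
move=> Me /subsetP YX; apply/bigcupsP => s Ys; apply/subsetP => t.
rewrite !inE => /andP[Wt Mst]; rewrite Wt andbT.
case: (t \in X); rewrite /= ?orbT ?orbF //.
by apply/existsP; exists s; rewrite YX ?Me.
Qed.

Lemma ler_pred_half_natM (R : numFieldType) (m x c : nat) : (0 < m)%N ->
  ((m - 1) * x <= 2 * c)%N -> (m%:R - 1) / 2 * x%:R <= c%:R :> R.
Proof.
move=> m_gt0; rewrite -(ler_nat R) !natrM natrB // => le_mx_c.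
by rewrite mulrAC ler_pdivrMr // [_ * 2]mulrC.
Qed.

Theorem lemma14 (T : finType) (e : rel T) (m k : nat) (S : {set T}) :
  simple_graph e -> (1 < m)%N -> (0 < k)%N ->
  m_matching e m S (~: S) ->
  induced_expander e (~: S) k (m%:R) ->
  expander e k ((m%:R - 1) / 2).
Proof.
move=> _ m_gt1 _ [_ [M [Msym [Me [degS degW]]]]] expW X Xk.
set X1 := X :&: S; set X2 := X :&: ~: S; set c := #|nbhd e X :\: X|.
have cardX : #|X| = (#|X1| + #|X2|)%N by rewrite -(cardsID S X) setDE.
have X2k : (#|X2| <= k)%N by apply: leq_trans Xk; apply/subset_leq_card/subsetIl.
have expX2 : (m * #|X2| <= c)%N.
  have := expW X2 (subsetIr _ _) X2k; rewrite -natrM ler_nat => /leq_trans; apply.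
  exact/subset_leq_card/induced_nbhd_sub.
have expX1 : (m * #|X1| <= c + #|X2|)%N.
  rewrite -(card_matched_partners Msym degS degW (subsetIr X S)).
  apply: leq_trans (leq_card_setU _ _).
  exact/subset_leq_card/matched_partners_sub/subsetIl.
apply: ler_pred_half_natM; first exact: ltnW.
by rewrite cardX; nia.
Qed.
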